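(* In the linear deterministic diamond network with a disturbing node with gains $n_1,n_2,n_3,n_4,m$, suppose $n_1>n_2$, $n_3\ge n_4$ and $m\ge n_1$. Then the linear capacity is $C=\min(n_1,n_4)$.
   Context: The shift matrix $Q$ is the $q\times q$ matrix over $\mathbb{F}_2$ with $Q_{i+1,i}=1$ for $1\le i\le q-1$ and all other entries $0$, where $q=\max(n_1,n_2,n_3,n_4,m)$ and all gains are nonnegative integers. Network: source $S$, relays $A,B$, destination $D$, disturbing node $M$; gains $n_1$ ($S\to A$), $n_2$ ($S\to B$), $n_3$ ($A\to D$), $n_4$ ($B\to D$), $m$ ($M\to A$ and $M\to B$). Each node transmits $x_i\in\mathbb{F}_2^q$ and receives $y_j=\sum_{k:(k,j)\text{ an edge}}Q^{q-n_{(k,j)}}x_k$; relays use linear maps $x_A=G_Ay_A$, $x_B=G_By_B$ with $G_A,G_B$ arbitrary $q\times q$ matrices over $\mathbb{F}_2$. Then $y_D=G_Sx_S+G_Mx_M$ with $G_S=Q^{q-n_3}G_AQ^{q-n_1}+Q^{q-n_4}G_BQ^{q-n_2}$ and $G_M=Q^{q-n_3}G_AQ^{q-m}+Q^{q-n_4}G_BQ^{q-m}$. The rate $R(G_A,G_B)$ is the maximum dimension of a subspace $\mathcal{X}\subseteq\mathbb{F}_2^q$ such that for all $x_S,x_S'\in\mathcal{X}$, $x_M,x_M'\in\mathbb{F}_2^q$, $G_Sx_S+G_Mx_M=G_Sx_S'+G_Mx_M'$ implies $x_S=x_S'$. The linear capacity is $C=\max_{G_A,G_B}R(G_A,G_B)$.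 *)

From mathcomp Require Import all_boot all_order all_algebra.
Set Implicit Arguments. Unset Strict Implicit. Unset Printing Implicit Defensive.
Import GRing.Theory.
Local Open Scope ring_scope.

Definition qdim (n1 n2 n3 n4 m : nat) : nat :=
  maxn (maxn (maxn (maxn n1 n2) n3) n4) m.

(* Shift matrix: with 0-based indices, Q i j = 1 iff i = j + 1
   (i.e. Q_{i+1,i} = 1 in 1-based indexing). *)
Definition shiftQ (q : nat) : 'M['F_2]_q :=
  \matrix_(i < q, j < q) ((nat_of_ord i == (nat_of_ord j).+1)%N)%:R.

Definition shiftQpow (q k : nat) : 'M['F_2]_q := (shiftQ q) ^+ k.

(* End-to-end transfer matrices from S and from M to D. *)
Definition GSmx (n1 n2 n3 n4 m : nat) (GA GB : 'M['F_2]_(qdim n1 n2 n3 n4 m)) :=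
  let q := qdim n1 n2 n3 n4 m in
  shiftQpow q (q - n3) *m GA *m shiftQpow q (q - n1)
  + shiftQpow q (q - n4) *m GB *m shiftQpow q (q - n2).

Definition GMmx (n1 n2 n3 n4 m : nat) (GA GB : 'M['F_2]_(qdim n1 n2 n3 n4 m)) :=
  let q := qdim n1 n2 n3 n4 m in
  shiftQpow q (q - n3) *m GA *m shiftQpow q (q - m)
  + shiftQpow q (q - n4) *m GB *m shiftQpow q (q - m).

(* A subspace X of F_2^q is given as the column space of a q x q matrix V
   (every subspace arises this way); its dimension is \rank V. *)
Definition decodable (q : nat) (GS GM V : 'M['F_2]_q) : bool :=
  [forall c : 'cV['F_2]_q, forall c' : 'cV['F_2]_q,
   forall xM : 'cV['F_2]_q, forall xM' : 'cV['F_2]_q,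
     (GS *m (V *m c) + GM *m xM == GS *m (V *m c') + GM *m xM')
       ==> (V *m c == V *m c')].

Definition rate (n1 n2 n3 n4 m : nat) (GA GB : 'M['F_2]_(qdim n1 n2 n3 n4 m)) : nat :=
  \max_(V : 'M['F_2]_(qdim n1 n2 n3 n4 m)
          | decodable (GSmx GA GB) (GMmx GA GB) V) \rank V.

Definition lin_capacity (n1 n2 n3 n4 m : nat) : nat :=
  \max_(GA : 'M['F_2]_(qdim n1 n2 n3 n4 m))
   \max_(GB : 'M['F_2]_(qdim n1 n2 n3 n4 m)) rate GA GB.

From mathcomp Require Import all_boot all_order all_algebra zify.
Set Implicit Arguments. Unset Strict Implicit. Unset Printing Implicit Defensive.
Import GRing.Theory.
Local Open Scope ring_scope.

(* Upper bound: a decodable subspace must meet trivially the kernel of any part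
   of G_S that the interference G_M x_M can imitate.  G_S factors through
   Q^(q-n1), so its rank is at most n1; and since m >= n1,
   G_S = G_M Q^(m-n1) + Q^(q-n4) G_B (Q^(q-n2) - Q^(q-n1)), so modulo the
   interference G_S has rank at most n4.
   Lower bound: relay B applies (Q^(q-n1))^T and relay A the negative of
   Q^(n3-n4) times that, so the two copies of x_M cancel at D and
   G_S = Q^(q-n4) P_n1 (Q^(n1-n2) - 1), P_r the partial identity.  As n1 > n2,
   Q^(n1-n2) is nilpotent and Q^(n1-n2) - 1 is invertible (geometric series);
   what remains is injective on the first min(n1,n4) coordinates. *)

Section ShiftMatrix.
Variable q : nat.
Local Notation Q := (shiftQ q).

Lemma shiftQ_expE k (i j : 'I_q) : (Q ^+ k) i j = ((i : nat) == j + k)%N%:R.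
Proof.
elim: k i j => [|k IHk] i j; first by rewrite expr0 mxE addn0.
rewrite exprSr -mulmxE mxE.
have [jS_lt_q | q_le_jS] := ltnP j.+1 q.
  rewrite (bigD1 (Ordinal jS_lt_q)) //= big1 ?addr0 => [|l /eqP l_neq].
    by rewrite IHk mxE eqxx mulr1 addSnnS.
  rewrite mxE; case: eqP => [l_eq|_]; last by rewrite mulr0.
  by case: l_neq; apply: val_inj.
rewrite big1 => [|l _].
  by case: eqP => // i_eq; have := ltn_ord i; rewrite i_eq; lia.
rewrite mxE; case: eqP => [l_eq|_]; last by rewrite mulr0.
by have := ltn_ord l; lia.
Qed.

Lemma shiftQ_exp_eq0 k : (q <= k)%N -> Q ^+ k = 0.
Proof.
move=> q_le_k; apply/matrixP => i j; rewrite shiftQ_expE mxE.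
by case: eqP => // i_eq; have := ltn_ord i; lia.
Qed.

Lemma shiftQ_exp_pid s : Q ^+ s *m pid_mx (q - s) = Q ^+ s.
Proof.
apply/matrixP => i j; rewrite mxE (bigD1 j) //= big1 ?addr0 => [|l l_neq].
  rewrite shiftQ_expE !mxE eqxx /=; case: eqP => [i_eq|_]; last by rewrite mul0r.
  have j_lt : (j < q - s)%N by have := ltn_ord i; rewrite i_eq; lia.
  by rewrite j_lt mulr1.
rewrite !mxE; case: eqP => [l_eq|_]; last by rewrite andFb mulr0.
by move: l_neq; rewrite -val_eqE /= l_eq eqxx.
Qed.

Lemma mxrank_shiftQ_exp s : (\rank (Q ^+ s) <= q - s)%N.
Proof.
rewrite -shiftQ_exp_pid; apply: leq_trans (mxrankM_maxr _ _) _.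
by rewrite rank_pid_mx // leq_subr.
Qed.

Lemma tr_shiftQ_exp_mul s : (Q ^+ s)^T *m Q ^+ s = pid_mx (q - s).
Proof.
apply/matrixP => i j; rewrite !mxE.
have [is_lt_q | q_le_is] := ltnP (i + s) q.
  rewrite (bigD1 (Ordinal is_lt_q)) //= big1 ?addr0 => [|l l_neq].
    rewrite mxE !shiftQ_expE /= eqxx mul1r eqn_add2r.
    have -> : (i < q - s)%N by lia.
    by rewrite andbT.
  rewrite mxE shiftQ_expE; case: eqP => [l_eq|_]; last by rewrite mul0r.
  by move: l_neq; rewrite -val_eqE /= l_eq eqxx.
rewrite big1 => [|l _].
  have -> : (i < q - s)%N = false by lia.
  by rewrite andbF.
rewrite mxE shiftQ_expE; case: eqP => [l_eq|_]; last by rewrite mul0r.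
by have := ltn_ord l; lia.
Qed.

End ShiftMatrix.

Lemma mxrank_leq_of_ker (F : fieldType) p n r (A : 'M[F]_(p, n)) (V : 'M[F]_(n, r)) :
  (forall c : 'cV_r, A *m (V *m c) = 0 -> V *m c = 0) -> (\rank V <= \rank A)%N.
Proof.
move=> AV_inj.
have capV0 : (V^T :&: kermx A^T)%MS == 0.
  apply/rowV0P => v; rewrite sub_capmx => /andP[/submxP[d ->] /sub_kermxP dVA0].
  apply: trmx_inj; rewrite trmx0 trmx_mul trmxK AV_inj //.
  by apply: trmx_inj; rewrite !trmx_mul trmxK dVA0 trmx0.
rewrite -mxrank_tr -(mxrank_tr A) -(mxrank_mul_ker V^T A^T).
by rewrite (eqP capV0) mxrank0 addn0 mxrankM_maxr.
Qed.

Section Decodable.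
Variables (q : nat) (GS GM V : 'M['F_2]_q).

Lemma decodable_eq0 (c xM : 'cV['F_2]_q) :
  decodable GS GM V -> GS *m (V *m c) = GM *m xM -> V *m c = 0.
Proof.
move=> /forallP/(_ c)/forallP/(_ 0)/forallP/(_ 0)/forallP/(_ xM)/implyP dec eq_c.
by apply/eqP; rewrite -(mulmx0 _ V) dec // !mulmx0 addr0 add0r eq_c.
Qed.

Lemma decodable_mxrank_leq (P A : 'M['F_2]_q) :
  decodable GS GM V -> GS = GM *m P + A -> (\rank V <= \rank A)%N.
Proof.
move=> dec GS_eq; apply: mxrank_leq_of_ker => c AVc0.
apply: (decodable_eq0 (xM := P *m (V *m c)) dec).
by rewrite GS_eq mulmxDl AVc0 addr0 !mulmxA.
Qed.

Lemma decodable0_of_inverse (L : 'M['F_2]_q) :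
  V *m (L *m GS *m V) = V -> decodable GS 0 V.
Proof.
move=> V_retract; apply/forallP => c; apply/forallP => c'.
apply/forallP => xM; apply/forallP => xM'; apply/implyP.
rewrite !mul0mx !addr0 => /eqP GSV_eq.
by rewrite -V_retract -!mulmxA GSV_eq.
Qed.

End Decodable.

Section DiamondNetwork.
Variables n1 n2 n3 n4 m : nat.
Local Notation q := (qdim n1 n2 n3 n4 m).
Local Notation Q := (shiftQ q).

Lemma qdim_ge : [/\ (n1 <= q)%N, (n2 <= q)%N, (n3 <= q)%N, (n4 <= q)%N & (m <= q)%N].
Proof. by rewrite /qdim; split; lia. Qed.

Lemma lin_capacity_leq k :
  (forall GA GB V : 'M['F_2]_q, decodable (GSmx GA GB) (GMmx GA GB) V -> (\rank V <= k)%N) ->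
  (lin_capacity n1 n2 n3 n4 m <= k)%N.
Proof.
move=> rank_leq; apply/bigmax_leqP => GA _; apply/bigmax_leqP => GB _.
by apply/bigmax_leqP => V; apply: rank_leq.
Qed.

Lemma mxrank_leq_lin_capacity (GA GB V : 'M['F_2]_q) :
  decodable (GSmx GA GB) (GMmx GA GB) V -> (\rank V <= lin_capacity n1 n2 n3 n4 m)%N.
Proof.
move=> dec; have rate_ge : (\rank V <= rate GA GB)%N := leq_bigmax_cond V dec.
apply: leq_trans rate_ge (leq_trans (leq_bigmax (F := rate GA) GB) _).
exact: (leq_bigmax (F := fun GA => \max_GB rate GA GB) GA).
Qed.

Lemma GSmx_rfactor (GA GB : 'M['F_2]_q) : (n2 <= n1)%N ->
  GSmx GA GB = (Q ^+ (q - n3) *m GA + Q ^+ (q - n4) *m GB *m Q ^+ (n1 - n2)) *m Q ^+ (q - n1).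
Proof.
have [q1 q2 q3 q4 qm] := qdim_ge => n2_le_n1.
rewrite /GSmx /shiftQpow /=.
have -> : (q - n2 = (n1 - n2) + (q - n1))%N by lia.
by rewrite mulmxDl exprD -mulmxE !mulmxA.
Qed.

Lemma GSmx_GMmx (GA GB : 'M['F_2]_q) : (n1 <= m)%N ->
  GSmx GA GB = GMmx GA GB *m Q ^+ (m - n1)
               + Q ^+ (q - n4) *m (GB *m (Q ^+ (q - n2) - Q ^+ (q - n1))).
Proof.
have [q1 q2 q3 q4 qm] := qdim_ge => n1_le_m.
rewrite /GSmx /GMmx /shiftQpow /= !mulmxE mulrDl -!mulrA -!exprD.
have -> : (q - m + (m - n1) = q - n1)%N by lia.
by rewrite mulrBr mulrBr !mulrA -addrA; congr (_ + _); rewrite addrC subrK.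
Qed.

Lemma decodable_mxrank_leq_min (GA GB V : 'M['F_2]_q) : (n2 <= n1)%N -> (n1 <= m)%N ->
  decodable (GSmx GA GB) (GMmx GA GB) V -> (\rank V <= minn n1 n4)%N.
Proof.
have [q1 q2 q3 q4 qm] := qdim_ge => n2_le_n1 n1_le_m dec.
rewrite leq_min; apply/andP; split.
  apply: leq_trans (decodable_mxrank_leq (P := 0) dec _) _.
    by rewrite mulmx0 add0r; apply: GSmx_rfactor.
  apply: leq_trans (mxrankM_maxr _ _) _.
  by apply: leq_trans (mxrank_shiftQ_exp _ _) _; rewrite subKn.
apply: leq_trans (decodable_mxrank_leq dec (GSmx_GMmx _ _ n1_le_m)) _.
apply: leq_trans (mxrankM_maxl _ _) _.
by apply: leq_trans (mxrank_shiftQ_exp _ _) _; rewrite subKn.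
Qed.

Definition relayB : 'M['F_2]_q := (Q ^+ (q - n1))^T.
Definition relayA : 'M['F_2]_q := - (Q ^+ (n3 - n4) *m relayB).

Lemma shiftQ_exp_relayA : (n4 <= n3)%N ->
  Q ^+ (q - n3) *m relayA = - (Q ^+ (q - n4) *m relayB).
Proof.
have [q1 q2 q3 q4 qm] := qdim_ge => n4_le_n3.
rewrite /relayA !mulmxE mulrN mulrA -exprD.
by have -> : (q - n3 + (n3 - n4) = q - n4)%N by lia.
Qed.

Lemma GMmx_relay : (n4 <= n3)%N -> GMmx relayA relayB = 0.
Proof.
by move=> n4_le_n3; rewrite /GMmx /shiftQpow /= shiftQ_exp_relayA // mulNmx addNr.
Qed.

Lemma GSmx_relay : (n2 <= n1)%N -> (n4 <= n3)%N ->
  GSmx relayA relayB = Q ^+ (q - n4) *m pid_mx n1 *m (Q ^+ (n1 - n2) - 1).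
Proof.
have [q1 q2 q3 q4 qm] := qdim_ge => n2_le_n1 n4_le_n3.
have relayB_shift : relayB *m Q ^+ (q - n1) = pid_mx n1.
  by rewrite tr_shiftQ_exp_mul subKn.
rewrite GSmx_rfactor // shiftQ_exp_relayA // -relayB_shift !mulmxE.
by rewrite mulrBr mulr1 mulrDl mulNr -!mulrA -!exprD addnC addrC.
Qed.

Lemma relay_code : (n2 < n1)%N -> (n4 <= n3)%N -> exists V : 'M['F_2]_q,
  decodable (GSmx relayA relayB) (GMmx relayA relayB) V /\ (minn n1 n4 <= \rank V)%N.
Proof.
have [q1 q2 q3 q4 qm] := qdim_ge => n2_lt_n1 n4_le_n3.
set k := minn n1 n4; set d := (n1 - n2)%N.
pose W : 'M['F_2]_q := \sum_(i < q) (Q ^+ d) ^+ i.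
have QdW : (Q ^+ d - 1) * W = -1.
  by rewrite -subrX1 -exprM shiftQ_exp_eq0 ?sub0r // leq_pmull // subn_gt0.
have trQQ : (Q ^+ (q - n4))^T * Q ^+ (q - n4) = pid_mx n4.
  by rewrite -mulmxE tr_shiftQ_exp_mul subKn.
pose L : 'M['F_2]_q := - (Q ^+ (q - n4))^T.
have LGSW : L *m GSmx relayA relayB *m W = pid_mx k.
  rewrite GSmx_relay ?(ltnW n2_lt_n1) // !mulmxE -!mulrA QdW mulrN1 mulrN /L.
  rewrite mulNr mulrN opprK mulrA trQQ -mulmxE mul_pid_mx.
  by congr pid_mx; lia.
have k_le_q : (k <= q)%N by lia.
pose V : 'M['F_2]_q := W *m pid_mx k.
have LGSV : L *m GSmx relayA relayB *m V = pid_mx k by rewrite mulmxA LGSW pid_mx_id.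
exists V; split.
  rewrite GMmx_relay //; apply: (decodable0_of_inverse (L := L)).
  by rewrite LGSV -mulmxA pid_mx_id.
by rewrite -{1}(rank_pid_mx 'F_2 k_le_q k_le_q) -LGSV mxrankM_maxr.
Qed.

End DiamondNetwork.

Theorem mainTheorem5 (n1 n2 n3 n4 m : nat) :
  (n2 < n1)%N -> (n4 <= n3)%N -> (n1 <= m)%N ->
  lin_capacity n1 n2 n3 n4 m = minn n1 n4.
Proof.
move=> n2_lt_n1 n4_le_n3 n1_le_m; apply/eqP; rewrite eqn_leq; apply/andP; split.
  apply: lin_capacity_leq => GA GB V.
  exact: decodable_mxrank_leq_min (ltnW n2_lt_n1) n1_le_m.
have [V [dec k_le_rankV]] := relay_code m n2_lt_n1 n4_le_n3.
exact: leq_trans k_le_rankV (mxrank_leq_lin_capacity dec).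
Qed.
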